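(* Let $T$ be a rooted binary phylogenetic tree under the $N_2$ model. Then $RA_{\rm MP}(T)\ge RA_\varphi(T)$.
   Context: A rooted binary phylogenetic tree is a finite tree with a distinguished root vertex $\rho$ of out-degree 2, all edges directed away from $\rho$, and every other vertex of in-degree 1 and out-degree 0 or 2; out-degree-0 vertices are leaves, forming the leaf set $X$. Under the Neyman 2-state model $N_2$, each edge $e$ carries a substitution probability $p_e\in[0,\frac12]$; given the root state $F(\rho)$, states propagate independently along edges, each edge changing state with probability $p_e$; $f=F|_X$. Fitch sets: each leaf $x$ gets $\{f(x)\}$; a vertex with children $v_1,v_2$ gets $\mathrm{FS}(v_1)\cap\mathrm{FS}(v_2)$ if nonempty, else the union. $\mathrm{MP}(f,T)$ is a uniformly random element of $\mathrm{FS}(\rho)$, and $RA_{\rm MP}(T)=\mathbb P(\mathrm{MP}(f,T)=\alpha\mid F(\rho)=\alpha)$. The coin-toss method $\varphi$: leaves get their states; proceeding towards the root, a vertex whose two children have equal states gets that state, otherwise one of the two chosen by an independent fair coin toss; $RA_\varphi(T)$ is the probability that the state assigned to $\rho$ equals $F(\rho)$. *)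

From Stdlib Require Import Reals List Bool.
Import ListNotations.
Open Scope R_scope.

(* Rooted binary tree: a leaf, or an internal vertex with two children; each
   child edge carries its substitution probability p_e. Leaves are ordered
   left to right; a leaf-state assignment f is a list of states, one per leaf. *)
Inductive tree : Type :=
| Leaf : tree
| Node : R -> tree -> R -> tree -> tree.

Definition is_node (T : tree) : Prop :=
  match T with Leaf => False | Node _ _ _ _ => True end.

Fixpoint valid_params (T : tree) : Prop :=
  match T with
  | Leaf => True
  | Node p1 t1 p2 t2 =>
      0 <= p1 <= /2 /\ valid_params t1 /\ 0 <= p2 <= /2 /\ valid_params t2
  end.

Fixpoint nleaves (T : tree) : nat :=
  match T with Leaf => 1%nat | Node _ t1 _ t2 => (nleaves t1 + nleaves t2)%nat end.

Definition trans (p : R) (a b : bool) : R := if Bool.eqb a b then 1 - p else p.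

(* P(f = leaf states | state at the top vertex of T is a) *)
Fixpoint prob (T : tree) (a : bool) (f : list bool) : R :=
  match T with
  | Leaf => match f with [b] => if Bool.eqb a b then 1 else 0 | _ => 0 end
  | Node p1 t1 p2 t2 =>
      let f1 := firstn (nleaves t1) f in
      let f2 := skipn (nleaves t1) f in
      (trans p1 a false * prob t1 false f1 + trans p1 a true * prob t1 true f1) *
      (trans p2 a false * prob t2 false f2 + trans p2 a true * prob t2 true f2)
  end.

(* Fitch sets, as membership predicates on the state set {false,true} *)
Definition fset := bool -> bool.

Fixpoint fitch (T : tree) (f : list bool) : fset :=
  match T with
  | Leaf => fun b => Bool.eqb b (hd false f)
  | Node _ t1 _ t2 =>
      let s1 := fitch t1 (firstn (nleaves t1) f) in
      let s2 := fitch t2 (skipn (nleaves t1) f) in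
      let i := fun b => s1 b && s2 b in
      if i false || i true then i else fun b => s1 b || s2 b
  end.

Definition fsize (s : fset) : R :=
  (if s false then 1 else 0) + (if s true then 1 else 0).

(* P(MP(f,T) = a | f): uniform choice in the root Fitch set *)
Definition mp_hit (s : fset) (a : bool) : R := if s a then / fsize s else 0.

(* coin T f s = P(coin-toss method assigns state s to the top vertex | f) *)
Fixpoint coin (T : tree) (f : list bool) (s : bool) : R :=
  match T with
  | Leaf => if Bool.eqb s (hd false f) then 1 else 0
  | Node _ t1 _ t2 =>
      let q1 := coin t1 (firstn (nleaves t1) f) in
      let q2 := coin t2 (skipn (nleaves t1) f) in
      q1 s * q2 s + / 2 * (q1 s * q2 (negb s) + q1 (negb s) * q2 s)
  end.

Fixpoint all_lists (n : nat) : list (list bool) :=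
  match n with
  | O => [[]]
  | S m => map (cons false) (all_lists m) ++ map (cons true) (all_lists m)
  end.

Definition sumR (l : list (list bool)) (g : list bool -> R) : R :=
  fold_right (fun x acc => g x + acc) 0 l.

Definition RA_MP (T : tree) (a : bool) : R :=
  sumR (all_lists (nleaves T)) (fun f => prob T a f * mp_hit (fitch T f) a).

Definition RA_phi (T : tree) (a : bool) : R :=
  sumR (all_lists (nleaves T)) (fun f => prob T a f * coin T f a).

(* Both accuracies are expectations over leaf assignments given the root state,
   and they obey simple recursions along the tree.  An edge with substitution
   probability p maps a child accuracy m to the parent accuracy
   1/2 + (1 - 2p)(m - 1/2), which is monotone in m.  Because the children of a
   vertex evolve independently and Fitch sets and the coin-toss method commute
   with swapping the two states, the accuracies at a vertex are, with A_i and
   C_i the edge-transported accuracies of the children,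
     RA_phi = (C_1 + C_2)/2,
     RA_MP  = (A_1 + A_2)/2 + (W_2 (A_1 - 1/2) + W_1 (A_2 - 1/2))/2,
   where W_i >= 0 is the probability that the Fitch set of child i is {0,1}.
   By induction RA_MP >= RA_phi and RA_MP >= 1/2 at every vertex. *)

From Stdlib Require Import Reals Lra Lia List Bool FunctionalExtensionality.
Open Scope R_scope.

Lemma sumR_app l1 l2 g : sumR (l1 ++ l2) g = sumR l1 g + sumR l2 g.
Proof. induction l1 as [|a l1 IH]; simpl; [ring | rewrite IH; ring]. Qed.

Lemma sumR_map (k : list bool -> list bool) l g :
  sumR (map k l) g = sumR l (fun y => g (k y)).
Proof. induction l as [|a l IH]; simpl; [reflexivity | rewrite IH; reflexivity]. Qed.

Lemma sumR_ext_in l g h : (forall y, In y l -> g y = h y) -> sumR l g = sumR l h.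
Proof.
  induction l as [|a l IH]; intros H; simpl; [reflexivity|].
  rewrite (H a (in_eq a l)), IH; [reflexivity|].
  intros y Hy; apply H; right; exact Hy.
Qed.

Lemma sumR_plus l g h : sumR l (fun y => g y + h y) = sumR l g + sumR l h.
Proof. induction l as [|a l IH]; simpl; [ring | rewrite IH; ring]. Qed.

Lemma sumR_scal l c g : sumR l (fun y => c * g y) = c * sumR l g.
Proof. induction l as [|a l IH]; simpl; [ring | rewrite IH; ring]. Qed.

Lemma sumR_nonneg l g : (forall y, In y l -> 0 <= g y) -> 0 <= sumR l g.
Proof.
  induction l as [|a l IH]; intros H; simpl; [lra|].
  apply Rplus_le_le_0_compat; [apply H; left; reflexivity|].
  apply IH; intros y Hy; apply H; right; exact Hy.
Qed.

Lemma sumR_mul (L1 L2 : list (list bool)) g1 g2 :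
  sumR L1 (fun f1 => sumR L2 (fun f2 => g1 f1 * g2 f2)) = sumR L1 g1 * sumR L2 g2.
Proof.
  rewrite (sumR_ext_in L1 _ (fun f1 => g1 f1 * sumR L2 g2)).
  - rewrite Rmult_comm, <- sumR_scal; apply sumR_ext_in; intros; ring.
  - intros; apply sumR_scal.
Qed.

Lemma sumR_all_lists_S n g : sumR (all_lists (S n)) g =
  sumR (all_lists n) (fun f => g (false :: f)) + sumR (all_lists n) (fun f => g (true :: f)).
Proof. simpl; rewrite sumR_app, !sumR_map; reflexivity. Qed.

Lemma length_all_lists n f : In f (all_lists n) -> length f = n.
Proof.
  revert f; induction n as [|n IH]; intros f H; simpl in H.
  - destruct H as [<-|[]]; reflexivity.
  - apply in_app_or in H; destruct H as [H|H]; apply in_map_iff in H;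
      destruct H as [g [<- Hg]]; simpl; f_equal; auto.
Qed.

Lemma sumR_all_lists_add n1 n2 g : sumR (all_lists (n1 + n2)) g =
  sumR (all_lists n1) (fun f1 => sumR (all_lists n2) (fun f2 => g (f1 ++ f2))).
Proof.
  revert g; induction n1 as [|n1 IH]; intros g.
  - simpl; rewrite Rplus_0_r; reflexivity.
  - change (S n1 + n2)%nat with (S (n1 + n2)); rewrite !sumR_all_lists_S, !IH; reflexivity.
Qed.

Lemma sumR_all_lists_negb n g :
  sumR (all_lists n) (fun f => g (map negb f)) = sumR (all_lists n) g.
Proof.
  revert g; induction n as [|n IH]; intros g; [reflexivity|].
  rewrite !sumR_all_lists_S; cbn [map negb].
  rewrite (IH (fun f => g (true :: f))), (IH (fun f => g (false :: f))); ring.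
Qed.

Lemma firstn_app_length {A} n (l1 l2 : list A) : length l1 = n -> firstn n (l1 ++ l2) = l1.
Proof. intros <-; rewrite firstn_app, firstn_all, Nat.sub_diag, app_nil_r; reflexivity. Qed.

Lemma skipn_app_length {A} n (l1 l2 : list A) : length l1 = n -> skipn n (l1 ++ l2) = l2.
Proof. intros <-; rewrite skipn_app, skipn_all, Nat.sub_diag; reflexivity. Qed.

Lemma length_firstn_add {A} n1 n2 (l : list A) :
  length l = (n1 + n2)%nat -> length (firstn n1 l) = n1.
Proof. intros Hl; apply firstn_length_le; lia. Qed.

Lemma length_skipn_add {A} n1 n2 (l : list A) :
  length l = (n1 + n2)%nat -> length (skipn n1 l) = n2.
Proof. intros Hl; rewrite length_skipn; lia. Qed.

(** * Expectations given the state at the top vertex *)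

Definition expect (T : tree) (x : bool) (e : list bool -> R) : R :=
  sumR (all_lists (nleaves T)) (fun f => prob T x f * e f).

(* the child's top state equals the parent's state x with probability 1 - p *)
Definition expect_edge (p : R) (t : tree) (x : bool) (e : list bool -> R) : R :=
  (1 - p) * expect t x e + p * expect t (negb x) e.

Lemma expect_ext T x e e' :
  (forall f, length f = nleaves T -> e f = e' f) -> expect T x e = expect T x e'.
Proof.
  intros H; apply sumR_ext_in; intros f Hf.
  rewrite H; [reflexivity | exact (length_all_lists _ _ Hf)].
Qed.

Lemma expect_plus T x e1 e2 :
  expect T x (fun f => e1 f + e2 f) = expect T x e1 + expect T x e2.
Proof. unfold expect; rewrite <- sumR_plus; apply sumR_ext_in; intros; ring. Qed.

Lemma expect_scal T x c e : expect T x (fun f => c * e f) = c * expect T x e.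
Proof. unfold expect; rewrite <- sumR_scal; apply sumR_ext_in; intros; ring. Qed.

Lemma prob_nonneg T x f : valid_params T -> 0 <= prob T x f.
Proof.
  revert x f; induction T as [|p1 t1 IH1 p2 t2 IH2]; intros x f HV.
  - destruct f as [|b [|]]; simpl; try lra; destruct (Bool.eqb x b); lra.
  - destruct HV as [Hp1 [V1 [Hp2 V2]]].
    assert (Htrans : forall p a b, 0 <= p <= /2 -> 0 <= trans p a b)
      by (intros p a b Hp; unfold trans; destruct (Bool.eqb a b); lra).
    simpl; apply Rmult_le_pos; apply Rplus_le_le_0_compat; apply Rmult_le_pos; auto.
Qed.

Lemma expect_nonneg T x e :
  valid_params T -> (forall f, 0 <= e f) -> 0 <= expect T x e.
Proof.
  intros HV He; apply sumR_nonneg; intros f _.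
  apply Rmult_le_pos; [apply prob_nonneg; exact HV | apply He].
Qed.

Lemma expect_edge_sum p t x e : expect_edge p t x e =
  sumR (all_lists (nleaves t)) (fun f => ((1 - p) * prob t x f + p * prob t (negb x) f) * e f).
Proof.
  unfold expect_edge, expect; rewrite <- !sumR_scal, <- sumR_plus.
  apply sumR_ext_in; intros; ring.
Qed.

Lemma expect_Node p1 t1 p2 t2 x g1 g2 :
  expect (Node p1 t1 p2 t2) x
    (fun f => g1 (firstn (nleaves t1) f) * g2 (skipn (nleaves t1) f))
  = expect_edge p1 t1 x g1 * expect_edge p2 t2 x g2.
Proof.
  unfold expect; cbn [nleaves]; rewrite sumR_all_lists_add, !expect_edge_sum, <- sumR_mul.
  apply sumR_ext_in; intros f1 H1; apply sumR_ext_in; intros f2 _.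
  apply length_all_lists in H1.
  cbn [prob]; rewrite firstn_app_length, skipn_app_length by exact H1.
  destruct x; unfold trans; simpl; ring.
Qed.

Lemma expect_one T x : expect T x (fun _ => 1) = 1.
Proof.
  revert x; induction T as [|p1 t1 IH1 p2 t2 IH2]; intros x.
  - destruct x; unfold expect; simpl; ring.
  - transitivity (expect_edge p1 t1 x (fun _ => 1) * expect_edge p2 t2 x (fun _ => 1)).
    + rewrite <- expect_Node; apply expect_ext; intros; ring.
    + unfold expect_edge; rewrite !IH1, !IH2; ring.
Qed.

Lemma expect_const T x c : expect T x (fun _ => c) = c.
Proof.
  rewrite (expect_ext _ _ _ (fun _ => c * 1)) by (intros; ring).
  rewrite expect_scal, expect_one; ring.
Qed.

Lemma expect_Node_l p1 t1 p2 t2 x g1 :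
  expect (Node p1 t1 p2 t2) x (fun f => g1 (firstn (nleaves t1) f)) = expect_edge p1 t1 x g1.
Proof.
  transitivity (expect_edge p1 t1 x g1 * expect_edge p2 t2 x (fun _ => 1)).
  - rewrite <- expect_Node; apply expect_ext; intros; ring.
  - unfold expect_edge at 2; rewrite !expect_one; ring.
Qed.

Lemma expect_Node_r p1 t1 p2 t2 x g2 :
  expect (Node p1 t1 p2 t2) x (fun f => g2 (skipn (nleaves t1) f)) = expect_edge p2 t2 x g2.
Proof.
  transitivity (expect_edge p1 t1 x (fun _ => 1) * expect_edge p2 t2 x g2).
  - rewrite <- expect_Node; apply expect_ext; intros; ring.
  - unfold expect_edge at 1; rewrite !expect_one; ring.
Qed.

(** * Symmetry of the model under swapping the two states *)

Lemma prob_negb T x f :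
  length f = nleaves T -> prob T x (map negb f) = prob T (negb x) f.
Proof.
  revert x f; induction T as [|p1 t1 IH1 p2 t2 IH2]; intros x f Hf.
  - destruct f as [|c [|]]; try discriminate; destruct x, c; reflexivity.
  - simpl in Hf; cbn [prob]; rewrite firstn_map, skipn_map.
    rewrite !IH1 by exact (length_firstn_add _ _ _ Hf).
    rewrite !IH2 by exact (length_skipn_add _ _ _ Hf).
    destruct x; unfold trans; simpl; ring.
Qed.

Lemma expect_negb T x e : expect T (negb x) e = expect T x (fun f => e (map negb f)).
Proof.
  unfold expect; rewrite <- (sumR_all_lists_negb _ (fun f => prob T (negb x) f * e f)).
  apply sumR_ext_in; intros f Hf; apply length_all_lists in Hf.
  rewrite prob_negb, negb_involutive by exact Hf; reflexivity.
Qed.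

Definition edge_acc (p m : R) : R := /2 + (1 - 2 * p) * (m - /2).

Lemma expect_edge_invariant p t x e :
  (forall f, length f = nleaves t -> e (map negb f) = e f) ->
  expect_edge p t x e = expect t x e.
Proof.
  intros He; unfold expect_edge.
  rewrite expect_negb, (expect_ext _ _ (fun f => e (map negb f)) e He); ring.
Qed.

Lemma expect_edge_complement p t x e :
  (forall f, length f = nleaves t -> e (map negb f) = 1 - e f) ->
  expect_edge p t x e = edge_acc p (expect t x e).
Proof.
  intros He; unfold expect_edge, edge_acc.
  rewrite expect_negb, (expect_ext _ _ (fun f => e (map negb f)) (fun f => 1 + (-1) * e f))
    by (intros f Hf; cbv beta; rewrite He by exact Hf; ring).
  rewrite expect_plus, expect_const, expect_scal; field.
Qed.

Lemma edge_acc_le p m m' : 0 <= p <= /2 -> m <= m' -> edge_acc p m <= edge_acc p m'.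
Proof. intros Hp Hm; unfold edge_acc; apply Rplus_le_compat_l, Rmult_le_compat_l; lra. Qed.

Lemma edge_acc_half p : edge_acc p (/2) = /2.
Proof. unfold edge_acc; ring. Qed.

Definition fmerge (s1 s2 : fset) : fset :=
  let i := fun b => s1 b && s2 b in
  if i false || i true then i else fun b => s1 b || s2 b.

Definition fnonempty (s : fset) : bool := s false || s true.

Definition fneg (s : fset) : fset := fun z => s (negb z).

Definition both (s : fset) : R := if s false && s true then 1 else 0.

Ltac fset_cases s1 s2 :=
  destruct (s1 false) eqn:?, (s1 true) eqn:?, (s2 false) eqn:?, (s2 true) eqn:?;
  simpl; repeat match goal with H : _ = _ |- _ => rewrite H end; simpl.

Lemma fitch_Node p1 t1 p2 t2 f : fitch (Node p1 t1 p2 t2) f =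
  fmerge (fitch t1 (firstn (nleaves t1) f)) (fitch t2 (skipn (nleaves t1) f)).
Proof. reflexivity. Qed.

Lemma fmerge_nonempty s1 s2 :
  fnonempty s1 = true -> fnonempty s2 = true -> fnonempty (fmerge s1 s2) = true.
Proof.
  unfold fnonempty, fmerge.
  fset_cases s1 s2; congruence.
Qed.

Lemma fitch_nonempty T f : fnonempty (fitch T f) = true.
Proof.
  revert f; induction T as [|p1 t1 IH1 p2 t2 IH2]; intros f.
  - unfold fnonempty; simpl; destruct (hd false f); reflexivity.
  - rewrite fitch_Node; apply fmerge_nonempty; [apply IH1 | apply IH2].
Qed.

Lemma fmerge_fneg s1 s2 : fmerge (fneg s1) (fneg s2) = fneg (fmerge s1 s2).
Proof.
  apply functional_extensionality; intros z; unfold fmerge, fneg; simpl.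
  destruct z; fset_cases s1 s2; reflexivity.
Qed.

Lemma fitch_negb T f : length f = nleaves T -> fitch T (map negb f) = fneg (fitch T f).
Proof.
  revert f; induction T as [|p1 t1 IH1 p2 t2 IH2]; intros f Hf.
  - destruct f as [|c [|]]; try discriminate.
    apply functional_extensionality; intros z; unfold fneg; destruct z, c; reflexivity.
  - simpl in Hf; rewrite !fitch_Node, firstn_map, skipn_map.
    rewrite IH1 by exact (length_firstn_add _ _ _ Hf).
    rewrite IH2 by exact (length_skipn_add _ _ _ Hf).
    apply fmerge_fneg.
Qed.

Lemma both_nonneg s : 0 <= both s.
Proof. unfold both; destruct (_ && _); lra. Qed.

Lemma both_fneg s : both (fneg s) = both s.
Proof. unfold both, fneg; simpl; rewrite andb_comm; reflexivity. Qed.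

Lemma mp_hit_fneg s x : mp_hit (fneg s) x = mp_hit s (negb x).
Proof.
  unfold mp_hit, fsize, fneg; rewrite Rplus_comm; reflexivity.
Qed.

Lemma mp_hit_complement s x :
  fnonempty s = true -> mp_hit s (negb x) = 1 - mp_hit s x.
Proof.
  unfold fnonempty, mp_hit, fsize.
  destruct x; simpl; destruct (s false), (s true); simpl; intros H; try discriminate;
    rewrite ?Rplus_0_l, ?Rplus_0_r, ?Rinv_1;
    try replace (1 + 1) with 2 by ring; lra.
Qed.

Lemma mp_hit_fmerge s1 s2 x :
  fnonempty s1 = true -> fnonempty s2 = true ->
  mp_hit (fmerge s1 s2) x =
    (mp_hit s1 x + mp_hit s2 x) / 2
    + (both s2 * (mp_hit s1 x - /2) + both s1 * (mp_hit s2 x - /2)) / 2.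
Proof.
  unfold fnonempty, fmerge, mp_hit, fsize, both.
  destruct x; fset_cases s1 s2; intros H1 H2;
    try discriminate; rewrite ?Rplus_0_l, ?Rplus_0_r, ?Rinv_1;
    try replace (1 + 1) with 2 by ring; lra.
Qed.

Lemma coin_complement T f x : coin T f (negb x) = 1 - coin T f x.
Proof.
  revert f x; induction T as [|p1 t1 IH1 p2 t2 IH2]; intros f x.
  - simpl; destruct x, (hd false f); simpl; ring.
  - cbn [coin]; rewrite negb_involutive, !IH1, !IH2; field.
Qed.

Lemma coin_negb T f x : length f = nleaves T -> coin T (map negb f) x = coin T f (negb x).
Proof.
  revert f x; induction T as [|p1 t1 IH1 p2 t2 IH2]; intros f x Hf.
  - destruct f as [|c [|]]; try discriminate; destruct x, c; reflexivity.
  - simpl in Hf; cbn [coin]; rewrite firstn_map, skipn_map.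
    rewrite !IH1 by exact (length_firstn_add _ _ _ Hf).
    rewrite !IH2 by exact (length_skipn_add _ _ _ Hf).
    reflexivity.
Qed.

Lemma coin_Node p1 t1 p2 t2 f x : coin (Node p1 t1 p2 t2) f x =
  (coin t1 (firstn (nleaves t1) f) x + coin t2 (skipn (nleaves t1) f) x) / 2.
Proof. cbn [coin]; rewrite !coin_complement; field. Qed.

(** * Recursions for the two accuracies *)

Lemma RA_phi_Node p1 t1 p2 t2 x : RA_phi (Node p1 t1 p2 t2) x =
  (edge_acc p1 (RA_phi t1 x) + edge_acc p2 (RA_phi t2 x)) / 2.
Proof.
  change (RA_phi (Node p1 t1 p2 t2) x) with
    (expect (Node p1 t1 p2 t2) x (fun f => coin (Node p1 t1 p2 t2) f x)).
  rewrite (expect_ext _ _ _ (fun f => /2 * coin t1 (firstn (nleaves t1) f) x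
                                    + /2 * coin t2 (skipn (nleaves t1) f) x))
    by (intros; rewrite coin_Node; field).
  rewrite expect_plus, !expect_scal.
  rewrite (expect_Node_l _ _ _ _ _ (fun g => coin t1 g x)),
          (expect_Node_r _ _ _ _ _ (fun g => coin t2 g x)).
  rewrite !expect_edge_complement; [unfold RA_phi, expect; field | |];
    intros f Hf; rewrite coin_negb, coin_complement by exact Hf; reflexivity.
Qed.

Lemma RA_MP_Node p1 t1 p2 t2 x :
  let A1 := edge_acc p1 (RA_MP t1 x) in
  let A2 := edge_acc p2 (RA_MP t2 x) in
  let W1 := expect t1 x (fun f => both (fitch t1 f)) in
  let W2 := expect t2 x (fun f => both (fitch t2 f)) in
  RA_MP (Node p1 t1 p2 t2) x = (A1 + A2) / 2 + (W2 * (A1 - /2) + W1 * (A2 - /2)) / 2.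
Proof.
  intros A1 A2 W1 W2.
  set (h1 := fun g => mp_hit (fitch t1 g) x); set (h2 := fun g => mp_hit (fitch t2 g) x).
  set (b1 := fun g => both (fitch t1 g)); set (b2 := fun g => both (fitch t2 g)).
  set (n := nleaves t1).
  change (RA_MP (Node p1 t1 p2 t2) x) with
    (expect (Node p1 t1 p2 t2) x (fun f => mp_hit (fitch (Node p1 t1 p2 t2) f) x)).
  rewrite (expect_ext _ _ _ (fun f =>
      /2 * h1 (firstn n f) + (/2 * h2 (skipn n f)
    + (/2 * (h1 (firstn n f) * b2 (skipn n f)) + (/2 * (b1 (firstn n f) * h2 (skipn n f))
    + (- /4 * b2 (skipn n f) + - /4 * b1 (firstn n f)))))))
    by (intros f _; rewrite fitch_Node, mp_hit_fmerge by apply fitch_nonempty;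
        unfold h1, h2, b1, b2, n; field).
  rewrite !expect_plus, !expect_scal, !expect_Node, !expect_Node_l, !expect_Node_r.
  assert (Hh : forall t f, length f = nleaves t ->
            mp_hit (fitch t (map negb f)) x = 1 - mp_hit (fitch t f) x).
  { intros t f Hf; rewrite fitch_negb, mp_hit_fneg by exact Hf.
    apply mp_hit_complement, fitch_nonempty. }
  assert (Hb : forall t f, length f = nleaves t ->
            both (fitch t (map negb f)) = both (fitch t f)).
  { intros t f Hf; rewrite fitch_negb by exact Hf; apply both_fneg. }
  unfold h1, h2, b1, b2.
  rewrite !expect_edge_complement, !expect_edge_invariant by auto.
  unfold A1, A2, W1, W2, RA_MP, expect; field.
Qed.

Lemma mp_recursion_dominates A1 A2 C1 C2 W1 W2 :
  C1 <= A1 -> C2 <= A2 -> /2 <= A1 -> /2 <= A2 -> 0 <= W1 -> 0 <= W2 ->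
  let M := (A1 + A2) / 2 + (W2 * (A1 - /2) + W1 * (A2 - /2)) / 2 in
  (C1 + C2) / 2 <= M /\ /2 <= M.
Proof.
  intros HC1 HC2 HA1 HA2 HW1 HW2 M.
  assert (0 <= W2 * (A1 - /2)) by (apply Rmult_le_pos; lra).
  assert (0 <= W1 * (A2 - /2)) by (apply Rmult_le_pos; lra).
  unfold M; lra.
Qed.

Lemma RA_MP_dominates T x :
  valid_params T -> RA_phi T x <= RA_MP T x /\ /2 <= RA_MP T x.
Proof.
  revert x; induction T as [|p1 t1 IH1 p2 t2 IH2]; intros x HV.
  - unfold RA_phi, RA_MP, mp_hit, fsize.
    destruct x; simpl; rewrite ?Rplus_0_l, ?Rplus_0_r, ?Rinv_1; lra.
  - destruct HV as [Hp1 [V1 [Hp2 V2]]].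
    destruct (IH1 x V1) as [Hc1 Hh1], (IH2 x V2) as [Hc2 Hh2].
    rewrite RA_MP_Node, RA_phi_Node.
    apply mp_recursion_dominates.
    + apply edge_acc_le; assumption.
    + apply edge_acc_le; assumption.
    + rewrite <- (edge_acc_half p1); apply edge_acc_le; assumption.
    + rewrite <- (edge_acc_half p2); apply edge_acc_le; assumption.
    + apply expect_nonneg; [exact V1 | intros; apply both_nonneg].
    + apply expect_nonneg; [exact V2 | intros; apply both_nonneg].
Qed.

Theorem theorem5 (T : tree) (a : bool) :
  is_node T -> valid_params T -> RA_MP T a >= RA_phi T a.
Proof.
  intros _ HV; apply Rle_ge, (RA_MP_dominates T a HV).
Qed.
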